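(* Assume the standing hypotheses in the context. Consider, in a front tracking solution, a family of parallel contact discontinuities $\sigma_\alpha$, $\alpha=1,\dots,N$, of a linearly degenerate family $i$, and a single front $\sigma$ of a family $k\neq i$ which interacts with all of them. Let $\xi_\alpha$, $\xi$ be their shift rates before the interactions and $\xi_\alpha'$, $\xi'$ after, and assume $\xi_\alpha=\bar\xi$ for all $\alpha$. Let $\bar\Lambda$, $\Lambda$ be the speeds of the $\sigma_\alpha$ and of $\sigma$ before interaction and $\bar\Lambda'$, $\Lambda'$ their speeds after interaction. Then after the interactions all $\xi_\alpha'$ have the same value $\bar\xi'$ and $$\xi_\alpha'=\bar\xi'=\frac{\bar\xi(\bar\Lambda'-\Lambda)-\xi(\bar\Lambda'-\bar\Lambda)}{\Lambda-\bar\Lambda},\qquad \xi'=\frac{\bar\xi(\Lambda'-\Lambda)-\xi(\bar\Lambda'-\bar\Lambda)}{\Lambda-\bar\Lambda}.$$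
   Context: Setting: $u_t+f(u)_x=0$ with $f:\Omega\to\mathbb{R}^n$ smooth, $\Omega\subseteq\mathbb{R}^n$ open, eigenvalues $\lambda_1<\dots<\lambda_n$ of $Df$ with right eigenvectors $r_i$. Standing assumptions: (H1) each field genuinely nonlinear ($r_i\bullet\lambda_i\neq0$) or linearly degenerate ($r_i\bullet\lambda_i\equiv0$); (H2) rarefaction curves form Riemann coordinates $w=(w_1,\dots,w_n)$; (H3) shock and rarefaction curves coincide; $E=\{u\in\Omega:w_i(u)\in[a_i,b_i]\}$ compact and uniformly strictly hyperbolic. Front tracking solution with parameter $\nu$: piecewise constant solution with values in $E^\nu=\{u\in E:w_i(u)\in2^{-\nu}\mathbb{Z}\}$ obtained by solving Riemann problems $[u^-,u^+]$ (split along $\omega_i=(w_1(u^+),\dots,w_i(u^+),w_{i+1}(u^-),\dots,w_n(u^-))$) with contact discontinuities of speed $\lambda_i$ for linearly degenerate fields, shocks with Rankine–Hugoniot speed, and rarefaction fronts with $w_i$-jump $2^{-\nu}$, and tracking interactions. Shift rates: if the initial jumps at $y_\alpha$ are moved to $y_\alpha+\theta\xi_\alpha$, each front at $x_\beta(t)$ of the original solution moves to $x_\beta(t)+\theta\xi_\beta(t)+o(\theta)$ in the perturbed front tracking solution; $\xi_\beta$ is the shift rate of that front. *)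

From Stdlib Require Import Reals.
Open Scope R_scope.

Definition littleo0 (e : R -> R) : Prop :=
  forall eps, 0 < eps -> exists delta, 0 < delta /\
    forall th, Rabs th < delta -> Rabs (e th) <= eps * Rabs th.

(** A family of fronts [pos th t] (position at time t of the front in the
    solution with perturbation parameter th; th = 0 is the original solution)
    has shift rate [xi] if pos th t = pos 0 t + th * xi + o(th). *)
Definition has_shift_rate (pos : R -> R -> R) (xi : R) : Prop :=
  forall t, littleo0 (fun th => pos th t - pos 0 t - th * xi).

(** Geometry of the interactions.
    - contacts sigma_a (a = 1..N) of speed [Lb] (= bar Lambda) before
      interaction, lying on the lines x = B a + Lb * t;
    - the front sigma lies initially on x = Y + Lam 0 * t and, after having
      crossed sigma_1, ..., sigma_a, moves with speed [Lam a]
      (Lam 0 = Lambda, Lam N = Lambda');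
    - after its interaction, sigma_a moves with speed [Lb'] (= bar Lambda').
    The front sigma after a crossings lies on x = sig_off a + Lam a * t. *)

Definition cross_time (c s b Lb : R) : R := (c - b) / (Lb - s).

Fixpoint sig_off (Lb : R) (Lam : nat -> R) (Y : R) (B : nat -> R) (a : nat) : R :=
  match a with
  | O => Y
  | S a' =>
      let t := cross_time (sig_off Lb Lam Y B a') (Lam a') (B (S a')) Lb in
      B (S a') + Lb * t - Lam (S a') * t
  end.

Definition int_time (Lb : R) (Lam : nat -> R) (Y : R) (B : nat -> R) (a : nat) : R :=
  cross_time (sig_off Lb Lam Y B (Nat.pred a)) (Lam (Nat.pred a)) (B a) Lb.

Definition int_pos (Lb : R) (Lam : nat -> R) (Y : R) (B : nat -> R) (a : nat) : R :=
  B a + Lb * int_time Lb Lam Y B a.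

Definition out_pos (Lb Lb' : R) (Lam : nat -> R) (Y : R) (B : nat -> R)
  (a : nat) (t : R) : R :=
  int_pos Lb Lam Y B a + Lb' * (t - int_time Lb Lam Y B a).

Definition sig_out_pos (Lb : R) (Lam : nat -> R) (Y : R) (B : nat -> R)
  (N : nat) (t : R) : R :=
  sig_off Lb Lam Y B N + Lam N * t.

(* Shifting the two lines that meet at an interaction moves the outgoing line
   by an affine combination of the two shifts, so first-order shift rates
   propagate through each crossing by the same affine rule.  Writing the rate
   of a front that leaves the contacts with speed s as
   xib + (s - Lb) (xib - xi) / (Lb - Lam 0), this form is preserved by every
   crossing: the rate after a crossing depends only on the outgoing speed,
   whence the formulas for the contacts (s = Lb') and for sigma (s = Lam N). *)

From Stdlib Require Import Reals Lra Lia.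
Open Scope R_scope.

Lemma littleo0_ext (f g : R -> R) :
  (forall th, f th = g th) -> littleo0 g -> littleo0 f.
Proof.
  intros Hfg Hg eps Heps.
  destruct (Hg eps Heps) as [d [Hd Hgd]].
  exists d; split; [exact Hd|].
  intros th Hth; rewrite Hfg; auto.
Qed.

Lemma littleo0_add (f g : R -> R) :
  littleo0 f -> littleo0 g -> littleo0 (fun th => f th + g th).
Proof.
  intros Hf Hg eps Heps.
  destruct (Hf (eps / 2)) as [d1 [Hd1 Hf1]]; [lra|].
  destruct (Hg (eps / 2)) as [d2 [Hd2 Hg2]]; [lra|].
  exists (Rmin d1 d2); split; [now apply Rmin_glb_lt|].
  intros th Hth.
  pose proof (Hf1 th (Rlt_le_trans _ _ _ Hth (Rmin_l _ _))).
  pose proof (Hg2 th (Rlt_le_trans _ _ _ Hth (Rmin_r _ _))).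
  eapply Rle_trans; [apply Rabs_triang|]; lra.
Qed.

Lemma littleo0_scale (c : R) (f : R -> R) :
  littleo0 f -> littleo0 (fun th => c * f th).
Proof.
  intros Hf eps Heps.
  pose proof (Rabs_pos c) as Hc.
  destruct (Hf (eps / (Rabs c + 1))) as [d [Hd Hfd]].
  { apply Rdiv_lt_0_compat; lra. }
  exists d; split; [exact Hd|].
  intros th Hth; rewrite Rabs_mult.
  assert (Hce : Rabs c * (eps / (Rabs c + 1)) <= eps).
  { apply Rle_trans with ((Rabs c + 1) * (eps / (Rabs c + 1))).
    - apply Rmult_le_compat_r; [left; apply Rdiv_lt_0_compat|]; lra.
    - right; field; lra. }
  apply Rle_trans with (Rabs c * (eps / (Rabs c + 1) * Rabs th)).
  - apply Rmult_le_compat_l; auto.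
  - rewrite <- Rmult_assoc; apply Rmult_le_compat_r; [apply Rabs_pos | exact Hce].
Qed.

Definition expands0 (f : R -> R) (r : R) : Prop :=
  littleo0 (fun th => f th - f 0 - th * r).

Lemma expands0_ext (f g : R -> R) (r : R) :
  (forall th, f th = g th) -> expands0 g r -> expands0 f r.
Proof.
  intros Hfg; apply littleo0_ext; intros th; rewrite !Hfg; reflexivity.
Qed.

Lemma expands0_addr (f : R -> R) (d r : R) :
  expands0 (fun th => f th + d) r <-> expands0 f r.
Proof. split; apply littleo0_ext; intros th; ring. Qed.

Lemma expands0_affine (f g : R -> R) (k rf rg : R) :
  expands0 f rf -> expands0 g rg ->
  expands0 (fun th => f th + k * (g th - f th)) (rf + k * (rg - rf)).
Proof.
  intros Hf Hg.
  apply (littleo0_ext _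
    (fun th => (1 - k) * (f th - f 0 - th * rf) + k * (g th - g 0 - th * rg))).
  - intros th; ring.
  - apply littleo0_add; apply littleo0_scale; assumption.
Qed.

Section Crossings.

Variables (Lb : R) (Lam : nat -> R).

Lemma sig_off_succ (Y : R) (B : nat -> R) (a : nat) :
  Lam a <> Lb ->
  sig_off Lb Lam Y B (S a) =
  B (S a) + (Lb - Lam (S a)) / (Lb - Lam a) * (sig_off Lb Lam Y B a - B (S a)).
Proof.
  intros Ha; simpl; unfold cross_time.
  field; lra.
Qed.

Lemma out_pos_succ (Lb' : R) (Y : R) (B : nat -> R) (a : nat) (t : R) :
  Lam a <> Lb ->
  out_pos Lb Lb' Lam Y B (S a) t =
  B (S a) + (Lb - Lb') / (Lb - Lam a) * (sig_off Lb Lam Y B a - B (S a)) + Lb' * t.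
Proof.
  intros Ha; unfold out_pos, int_pos, int_time, cross_time; simpl.
  field; lra.
Qed.

Variables (xib xi : R).

Definition outgoing_rate (s : R) : R :=
  (xib * (s - Lam 0%nat) - xi * (s - Lb)) / (Lb - Lam 0%nat).

Hypothesis Lam0_neq : Lam 0%nat <> Lb.

Lemma outgoing_rate_init : outgoing_rate (Lam 0%nat) = xi.
Proof. unfold outgoing_rate; field; lra. Qed.

Lemma outgoing_rate_cross (s s' : R) :
  s <> Lb ->
  xib + (Lb - s') / (Lb - s) * (outgoing_rate s - xib) = outgoing_rate s'.
Proof. intros Hs; unfold outgoing_rate; field; lra. Qed.

Variables (N : nat) (Y : R -> R) (B : R -> nat -> R).

Hypothesis Lam_neq : forall a, (a < N)%nat -> Lam a <> Lb.
Hypothesis B_expands : forall a, (1 <= a)%nat -> (a <= N)%nat ->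
  expands0 (fun th => B th a) xib.
Hypothesis Y_expands : expands0 Y xi.

Lemma sig_off_expands (a : nat) :
  (a <= N)%nat ->
  expands0 (fun th => sig_off Lb Lam (Y th) (B th) a) (outgoing_rate (Lam a)).
Proof.
  induction a as [|a IHa]; intros Ha.
  - rewrite outgoing_rate_init; exact Y_expands.
  - assert (Hneq : Lam a <> Lb) by (apply Lam_neq; lia).
    rewrite <- (outgoing_rate_cross (Lam a) (Lam (S a)) Hneq).
    eapply expands0_ext; [intros th; exact (sig_off_succ (Y th) (B th) a Hneq)|].
    apply expands0_affine; [apply B_expands; lia | apply IHa; lia].
Qed.

Lemma out_pos_expands (Lb' : R) (a : nat) (t : R) :
  (1 <= a)%nat -> (a <= N)%nat ->
  expands0 (fun th => out_pos Lb Lb' Lam (Y th) (B th) a t) (outgoing_rate Lb').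
Proof.
  intros Ha1 HaN; destruct a as [|a]; [lia|].
  assert (Hneq : Lam a <> Lb) by (apply Lam_neq; lia).
  rewrite <- (outgoing_rate_cross (Lam a) Lb' Hneq).
  eapply expands0_ext; [intros th; exact (out_pos_succ Lb' (Y th) (B th) a t Hneq)|].
  apply (expands0_addr (fun th => B th (S a) + (Lb - Lb') / (Lb - Lam a) *
           (sig_off Lb Lam (Y th) (B th) a - B th (S a)))).
  apply expands0_affine; [apply B_expands; lia | apply sig_off_expands; lia].
Qed.

End Crossings.

Theorem lemma3p3
  (N : nat) (Lb Lb' : R) (Lam : nat -> R)
  (Y : R -> R) (B : R -> nat -> R) (xib xi : R) :
  (1 <= N)%nat ->
  (* sigma crosses each contact transversally *)
  (forall a, (a < N)%nat -> Lam a <> Lb) ->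
  (* in the original solution sigma meets sigma_1, ..., sigma_N in this order *)
  (forall a, (1 <= a)%nat -> (a < N)%nat ->
     int_time Lb Lam (Y 0) (B 0) a < int_time Lb Lam (Y 0) (B 0) (S a)) ->
  (* incoming shift rates: all contacts have shift rate xib, sigma has xi *)
  (forall a, (1 <= a)%nat -> (a <= N)%nat ->
     has_shift_rate (fun th t => B th a + Lb * t) xib) ->
  has_shift_rate (fun th t => Y th + Lam 0%nat * t) xi ->
  (* outgoing shift rates *)
  (forall a, (1 <= a)%nat -> (a <= N)%nat ->
     has_shift_rate (fun th t => out_pos Lb Lb' Lam (Y th) (B th) a t)
       ((xib * (Lb' - Lam 0%nat) - xi * (Lb' - Lb)) / (Lb - Lam 0%nat))) /\
  has_shift_rate (fun th t => sig_out_pos Lb Lam (Y th) (B th) N t)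
    ((xib * (Lam N - Lam 0%nat) - xi * (Lam N - Lb)) / (Lb - Lam 0%nat)).
Proof.
  intros HN Hneq _ HB HY.
  assert (Hneq0 : Lam 0%nat <> Lb) by (apply Hneq; lia).
  assert (HBe : forall a, (1 <= a)%nat -> (a <= N)%nat ->
            expands0 (fun th => B th a) xib).
  { intros a Ha1 HaN; apply (expands0_addr _ (Lb * 0)), (HB a Ha1 HaN 0). }
  assert (HYe : expands0 Y xi) by apply (expands0_addr _ (Lam 0%nat * 0)), (HY 0).
  split.
  - intros a Ha1 HaN t.
    exact (out_pos_expands Lb Lam xib xi Hneq0 N Y B Hneq HBe HYe Lb' a t Ha1 HaN).
  - intros t.
    apply (expands0_addr (fun th => sig_off Lb Lam (Y th) (B th) N) (Lam N * t)).
    exact (sig_off_expands Lb Lam xib xi Hneq0 N Y B Hneq HBe HYe N (le_n N)).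
Qed.
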